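(* The vector fields of the central system pairwise commute: for all $j,k\ge1$, $[X_j,X_k]=0$ on $\mathcal H$, i.e. for every $i\ge0$, $$\frac{\partial}{\partial t_j}\Big(\frac{\partial H^{(i)}}{\partial t_k}\Big)=\frac{\partial}{\partial t_k}\Big(\frac{\partial H^{(i)}}{\partial t_j}\Big),$$ where the derivative along $X_j$ of the components of $X_k$ (which are polynomials in the coordinates $H^a_l$) is computed by the chain rule.
   Context: Let $z$ be a formal variable and $\mathcal L$ the space of formal Laurent series $\sum_{j\le N} l_j z^j$ (finitely many positive powers of $z$). Let $\mathcal H$ be the set of sequences $H=(H^{(k)})_{k\ge0}$ of elements of $\mathcal L$ with $H^{(0)}=1$ and, for $k\ge1$, $H^{(k)}=z^k+\sum_{l\ge1}H^k_l z^{-l}$; the coefficients $H^k_l$ are coordinates on $\mathcal H$, and we set $H^0_l=0$. The central system (CS) is the family of vector fields $X_j$, $j\ge1$, on $\mathcal H$, with associated times $t_j$, defined by $$\frac{\partial H^{(k)}}{\partial t_j}=H^{(j+k)}-H^{(j)}H^{(k)}+\sum_{l=1}^{k}H^j_lH^{(k-l)}+\sum_{l=1}^{j}H^k_lH^{(j-l)},\qquad k\ge0;$$ the right-hand side contains only negative powers of $z$, so this determines the components $X_j(H^k_l)$. *)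

From mathcomp Require Import all_boot all_algebra.
Set Implicit Arguments. Unset Strict Implicit. Unset Printing Implicit Defensive.
Import GRing.Theory Num.Theory.

(* Polynomial expressions (integer coefficients) in the coordinates
   H^a_l of the space \mathcal H; [EVar a l] stands for H^a_l (a, l >= 1). *)
Inductive cexpr : Type :=
  | EVar (a l : nat)
  | ECst (c : int)
  | EAdd (p q : cexpr)
  | EMul (p q : cexpr).

Definition ezero : cexpr := ECst 0%R.
Definition eone : cexpr := ECst 1%R.
Definition eneg (p : cexpr) : cexpr := EMul (ECst (-1)%R) p.
Definition esum (s : seq cexpr) : cexpr := foldr EAdd ezero s.

Fixpoint ceval (R : comPzRingType) (h : nat -> nat -> R) (p : cexpr) : R :=
  match p with
  | EVar a l => h a l
  | ECst c => c%:~R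
  | EAdd p q => (ceval h p + ceval h q)%R
  | EMul p q => (ceval h p * ceval h q)%R
  end.

(* derivative of a polynomial along the vector field with components V a l
   (= X(H^a_l)), computed by the chain rule (Leibniz rule on expressions) *)
Fixpoint cderiv (V : nat -> nat -> cexpr) (p : cexpr) : cexpr :=
  match p with
  | EVar a l => V a l
  | ECst _ => ezero
  | EAdd p q => EAdd (cderiv V p) (cderiv V q)
  | EMul p q => EAdd (EMul (cderiv V p) q) (EMul p (cderiv V q))
  end.

(* coordinate H^a_l, with the convention H^0_l = 0 *)
Definition Hcoord (a l : nat) : cexpr := if a == 0%N then ezero else EVar a l.

(* coefficient of z^n in H^(k):  H^(0) = 1,  H^(k) = z^k + sum_{l>=1} H^k_l z^-l *)
Definition coefL (k : nat) (n : int) : cexpr :=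
  if n == (k : int) then eone
  else if (n < 0)%R then Hcoord k (absz n) else ezero.

(* coefficient of z^n in H^(a) H^(b): sum over p + q = n, p <= a, q <= b
   (the only possibly nonzero terms), p = a - i for i = 0 .. a + b - n *)
Definition prodcoef (a b : nat) (n : int) : cexpr :=
  if (n <= (a : int) + (b : int))%R then
    esum [seq EMul (coefL a ((a : int) - Posz i)%R)
                   (coefL b (n - ((a : int) - Posz i))%R)
         | i <- iota 0 (absz ((a : int) + (b : int) - n)%R).+1]
  else ezero.

(* coefficient of z^n in
   H^(j+k) - H^(j) H^(k) + sum_{l=1}^k H^j_l H^(k-l) + sum_{l=1}^j H^k_l H^(j-l) *)
Definition cs_rhs (j k : nat) (n : int) : cexpr :=
  esum [:: coefL (j + k) n;
           eneg (prodcoef j k n);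
           esum [seq EMul (Hcoord j m) (coefL (k - m) n) | m <- iota 1 k];
           esum [seq EMul (Hcoord k m) (coefL (j - m) n) | m <- iota 1 j]].

(* component X_j(H^k_l): the coefficient of z^{-l} of dH^(k)/dt_j *)
Definition Xcomp (j k l : nat) : cexpr := cs_rhs j k (- (l : int))%R.

Definition Xfield (j : nat) : nat -> nat -> cexpr := fun a l => Xcomp j a l.

From HB Require Import structures.
From mathcomp Require Import all_boot all_algebra ring zify.
From Stdlib Require Import FunctionalExtensionality.
Set Implicit Arguments. Unset Strict Implicit. Unset Printing Implicit Defensive.
Import GRing.Theory Num.Theory.
Local Open Scope ring_scope.

(* For a Laurent series f of degree at most N let P_N f := f - sum_(m <= N) f_m H^(m);
   it has no nonnegative powers of z, and the right-hand side of (CS) is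
   -P(H^(j) H^(k)).  This identity holds over every commutative ring, so evaluating it
   at the dual point h + eps X_j computes derivatives by the chain rule:
   X_j H^(a) = -P(H^(j) H^(a)), and X_j applied to X_k H^(i) = -P(H^(k) H^(i)) gives
     P(P(H^(j) H^(k)) H^(i)) + P(H^(k) P(H^(j) H^(i))) + P(H^(j) P(H^(k) H^(i)))
       - P(H^(j) H^(k) H^(i)),
   which is symmetric in j and k by associativity and commutativity of the product. *)

Section DualNumbers.
Variable R : comPzRingType.

Definition dual := (R * R)%type.
HB.instance Definition _ := GRing.Zmodule.on dual.

Lemma dual_addE (x y : dual) : x + y = (x.1 + y.1, x.2 + y.2). Proof. by []. Qed.

Definition dual_mul (x y : dual) : dual := (x.1 * y.1, x.1 * y.2 + x.2 * y.1).
Definition dual_one : dual := (1, 0).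

Lemma dual_mulA : associative dual_mul.
Proof. by move=> [a b] [c d] [e f]; rewrite /dual_mul /=; congr pair; ring. Qed.

Lemma dual_mulC : commutative dual_mul.
Proof. by move=> [a b] [c d]; rewrite /dual_mul /=; congr pair; ring. Qed.

Lemma dual_mul1 : left_id dual_one dual_mul.
Proof. by move=> [a b]; rewrite /dual_mul /dual_one /=; congr pair; ring. Qed.

Lemma dual_mulDl : left_distributive dual_mul +%R.
Proof.
by move=> [a b] [c d] [e f]; rewrite /dual_mul /= !dual_addE /=; congr pair; ring.
Qed.

HB.instance Definition _ :=
  GRing.Zmodule_isComPzRing.Build dual dual_mulA dual_mulC dual_mul1 dual_mulDl.

Lemma dual_oppE (x : dual) : - x = (- x.1, - x.2). Proof. by []. Qed.
Lemma dual_sndN (x : dual) : (- x).2 = - x.2. Proof. by []. Qed.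
Lemma dual_mulE (x y : dual) : x * y = (x.1 * y.1, x.1 * y.2 + x.2 * y.1).
Proof. by []. Qed.

Lemma dual_intr (c : int) : (c%:~R : dual) = (c%:~R, 0).
Proof.
have dual_natr n : (1 : dual) *+ n = (1 *+ n, 0).
  by elim: n => [|n IHn] //; rewrite !mulrS IHn dual_addE /= addr0.
case: c => n; first by rewrite /intmul dual_natr.
by rewrite NegzE mulrNz dual_oppE /intmul dual_natr /= oppr0.
Qed.

Lemma dual_fst_sum I (r : seq I) (P : pred I) (F : I -> dual) :
  (\sum_(i <- r | P i) F i).1 = \sum_(i <- r | P i) (F i).1.
Proof. exact: (big_morph fst (id1 := 0) (op1 := +%R)). Qed.

Lemma dual_snd_sum I (r : seq I) (P : pred I) (F : I -> dual) :
  (\sum_(i <- r | P i) F i).2 = \sum_(i <- r | P i) (F i).2.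
Proof. exact: (big_morph snd (id1 := 0) (op1 := +%R)). Qed.

End DualNumbers.

Lemma ceval_dual (R : comPzRingType) (h : nat -> nat -> R) V p :
  ceval (fun a l => ((h a l, ceval h (V a l)) : dual R)) p =
  (ceval h p, ceval h (cderiv V p)).
Proof.
elim: p => [a l|c|p IHp q IHq|p IHp q IHq] //=.
- by rewrite dual_intr.
- by rewrite IHp IHq.
- by rewrite IHp IHq dual_mulE /= addrC.
Qed.

Section PowerSeries.
Variable A : comPzRingType.
Implicit Types F G H : nat -> A.

Definition ps_mul F G : nat -> A := fun t => \sum_(0 <= s < t.+1) F s * G (t - s)%N.

Lemma ps_mulC F G : ps_mul F G = ps_mul G F.
Proof.
apply: functional_extensionality => t; rewrite /ps_mul big_nat_rev /=.
by apply: eq_big_nat => s /andP[_ hs]; rewrite add0n subSS mulrC subKn.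
Qed.

Lemma ps_mulA F G H : ps_mul (ps_mul F G) H = ps_mul F (ps_mul G H).
Proof.
apply: functional_extensionality => t; rewrite /ps_mul.
transitivity (\sum_(0 <= a < t.+1) \sum_(0 <= x < t.+1 | (x < a.+1)%N)
                F x * G (a - x)%N * H (t - a)%N).
  apply: eq_big_nat => a /andP[_ ha]; rewrite mulr_suml.
  by rewrite (big_nat_widen 0 _ t.+1).
rewrite (exchange_big_dep_nat predT) //=.
apply: eq_big_nat => x /andP[_ hx]; rewrite mulr_sumr.
rewrite -(big_nat_widenl _ _ _ (fun i => true)) //.
rewrite -{1}(add0n x) big_addn subSn //; apply: eq_big_nat => b _.
by rewrite addnK mulrA addnC subnDA.
Qed.

Lemma ps_mulDr F G1 G2 :
  ps_mul F (fun t => G1 t + G2 t) = fun t => ps_mul F G1 t + ps_mul F G2 t.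
Proof.
apply: functional_extensionality => t; rewrite /ps_mul -big_split /=.
by apply: eq_bigr => s _; rewrite mulrDr.
Qed.

Lemma ps_mulNr F G : ps_mul F (fun t => - G t) = fun t => - ps_mul F G t.
Proof.
apply: functional_extensionality => t; rewrite /ps_mul -sumrN.
by apply: eq_bigr => s _; rewrite mulrN.
Qed.

Lemma ps_mul_sumr F M (c : nat -> A) (G : nat -> nat -> A) :
  ps_mul F (fun t => \sum_(m < M) c m * G m t) =
  fun t => \sum_(m < M) c m * ps_mul F (G m) t.
Proof.
apply: functional_extensionality => t; rewrite /ps_mul.
under eq_bigr do rewrite mulr_sumr.
rewrite exchange_big /=; apply: eq_bigr => m _; rewrite mulr_sumr.
by apply: eq_bigr => s _; rewrite mulrCA.
Qed.

Definition ps_shift (d : nat) F : nat -> A :=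
  fun t => if (d <= t)%N then F (t - d)%N else 0.

Lemma ps_mul_shiftl d F G : ps_mul (ps_shift d F) G = ps_shift d (ps_mul F G).
Proof.
apply: functional_extensionality => t; rewrite /ps_mul /ps_shift.
case: leqP => hdt; last first.
  rewrite big1_seq // => s /andP[_]; rewrite mem_index_iota => /andP[_ hs].
  by rewrite ifN ?mul0r // -ltnNge (leq_ltn_trans _ hdt).
rewrite (big_cat_nat _ (n := d)) //= ?(leq_trans hdt) //.
rewrite big1_seq ?add0r; last first.
  move=> s /andP[_]; rewrite mem_index_iota => /andP[_ hs].
  by rewrite ifN ?mul0r // -ltnNge.
rewrite -{1}(add0n d) big_addn subSn //.
apply: eq_big_nat => s _.
by rewrite leq_addl addnK addnC subnDA.
Qed.

End PowerSeries.

Section LaurentSeries.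
Variable A : comPzRingType.
Implicit Types (f g : int -> A) (F G : nat -> A).

(* A Laurent series f : int -> A of degree at most N is z^N times the power series
   [to_ps N f] in z^-1. *)
Definition ldeg_le (N : nat) f := forall n : int, N%:Z < n -> f n = 0.
Definition to_ps (N : nat) f : nat -> A := fun t => f (N%:Z - t%:Z).
Definition of_ps (N : nat) F : int -> A :=
  fun n => if n <= N%:Z then F (absz (N%:Z - n)) else 0.

(* N and M must bound the degrees of f and g; any such bounds give the same
   product, see [lmul_boundl]. *)
Definition lmul (N M : nat) f g : int -> A :=
  of_ps (N + M) (ps_mul (to_ps N f) (to_ps M g)).

Lemma of_psK N : cancel (of_ps N) (to_ps N).
Proof.
move=> F; apply: functional_extensionality => t; rewrite /to_ps /of_ps.
rewrite ifT; last by lia.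
by congr F; lia.
Qed.

Lemma to_psK N f : ldeg_le N f -> of_ps N (to_ps N f) = f.
Proof.
move=> df; apply: functional_extensionality => n; rewrite /to_ps /of_ps.
case: ifP => hn; last by rewrite df //; lia.
by congr f; lia.
Qed.

Lemma ldeg_le_of_ps N F : ldeg_le N (of_ps N F).
Proof. by move=> n hn; rewrite /of_ps ifF //; apply/negbTE; lia. Qed.

Lemma ldeg_le_lmul N M f g : ldeg_le (N + M) (lmul N M f g).
Proof. exact: ldeg_le_of_ps. Qed.

Lemma lmulA N M K f g h :
  lmul (N + M) K (lmul N M f g) h = lmul N (M + K) f (lmul M K g h).
Proof. by rewrite /lmul !of_psK ps_mulA addnA. Qed.

Lemma lmulC N M f g : lmul N M f g = lmul M N g f.
Proof. by rewrite /lmul ps_mulC addnC. Qed.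

Lemma lmulDr N M f g1 g2 :
  lmul N M f (fun n => g1 n + g2 n) = fun n => lmul N M f g1 n + lmul N M f g2 n.
Proof.
rewrite /lmul [to_ps M _]/to_ps ps_mulDr.
by apply: functional_extensionality => n; rewrite /of_ps; case: ifP; rewrite ?addr0.
Qed.

Lemma lmulNr N M f g : lmul N M f (fun n => - g n) = fun n => - lmul N M f g n.
Proof.
rewrite /lmul [to_ps M _]/to_ps ps_mulNr.
by apply: functional_extensionality => n; rewrite /of_ps; case: ifP; rewrite ?oppr0.
Qed.

Lemma lmulBr N M f g1 g2 :
  lmul N M f (fun n => g1 n - g2 n) = fun n => lmul N M f g1 n - lmul N M f g2 n.
Proof. by rewrite (lmulDr N M f g1 (fun n => - g2 n)) lmulNr. Qed.

Lemma lmulNl N M f g : lmul N M (fun n => - f n) g = fun n => - lmul N M f g n.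
Proof. by rewrite lmulC lmulNr lmulC. Qed.

Lemma lmul_sumr N M K (c : nat -> A) f (g : nat -> int -> A) :
  lmul N M f (fun n => \sum_(m < K) c m * g m n) =
  fun n => \sum_(m < K) c m * lmul N M f (g m) n.
Proof.
rewrite /lmul [to_ps M _]/to_ps (ps_mul_sumr _ _ c (fun m => to_ps M (g m))).
apply: functional_extensionality => n; rewrite /of_ps; case: ifP => // _.
by rewrite big1 // => m _; rewrite mulr0.
Qed.

Lemma to_ps_shift N N' f : ldeg_le N' f -> (N' <= N)%N ->
  to_ps N f = ps_shift (N - N') (to_ps N' f).
Proof.
move=> df hN; apply: functional_extensionality => t; rewrite /to_ps /ps_shift.
case: leqP => ht; first by congr f; lia.
by rewrite df //; rewrite -(subnK hN) in ht *; lia.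
Qed.

Lemma of_ps_shift N N' F : (N' <= N)%N -> of_ps N (ps_shift (N - N') F) = of_ps N' F.
Proof.
move=> hN; apply: functional_extensionality => n; rewrite /of_ps /ps_shift.
case: (boolP (n <= N'%:Z)) => hn.
  by rewrite !ifT; [congr F|..]; lia.
by case: ifP => // hnN; rewrite ifF //; apply/negbTE; lia.
Qed.

Lemma lmul_boundl N N' M f g : ldeg_le N' f -> (N' <= N)%N ->
  lmul N M f g = lmul N' M f g.
Proof.
move=> df hN; rewrite /lmul (to_ps_shift df hN) ps_mul_shiftl.
by rewrite -(subnDr M N N') of_ps_shift // leq_add2r.
Qed.

Lemma lmul_boundr N M M' f g : ldeg_le M' g -> (M' <= M)%N ->
  lmul N M f g = lmul N M' f g.
Proof. by move=> dg hM; rewrite lmulC (lmul_boundl _ _ dg hM) lmulC. Qed.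

End LaurentSeries.

Section HSeries.
Variable A : comPzRingType.
Variable v : nat -> nat -> A.
Implicit Types (f g : int -> A) (F G : nat -> A).

Definition Hser (a : nat) : int -> A := fun n => ceval v (coefL a n).
Definition Hcoef (a l : nat) : A := ceval v (Hcoord a l).

Definition Hnegpart (N : nat) f : int -> A :=
  fun n => f n - \sum_(0 <= m < N.+1) f m%:Z * Hser m n.

Lemma Hcoef0 l : Hcoef 0 l = 0. Proof. by []. Qed.

Lemma HserE a n :
  Hser a n = if n == a%:Z then 1 else if n < 0 then Hcoef a (absz n) else 0.
Proof. by rewrite /Hser /coefL; case: ifP => _ /=; rewrite ?mulr1z //; case: ifP. Qed.

Lemma Hser_nonneg a n : 0 <= n -> Hser a n = if n == a%:Z then 1 else 0.
Proof. by move=> hn; rewrite HserE; case: ifP => // _; rewrite ifF //; apply/negbTE; lia. Qed.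

Lemma ldeg_le_Hser a : ldeg_le a (Hser a).
Proof.
move=> n hn; rewrite Hser_nonneg; last by lia.
by rewrite ifF //; apply/negbTE; lia.
Qed.

Lemma to_ps_Hser a t :
  to_ps a (Hser a) t = if t == 0%N then 1 else if (a < t)%N then Hcoef a (t - a) else 0.
Proof.
rewrite /to_ps HserE.
case: (eqVneq t 0%N) => [->|ht]; first by rewrite subr0 eqxx.
rewrite ifF; last by apply/negbTE; lia.
case: ifP => hat; first by rewrite ifT; [congr Hcoef|]; lia.
by rewrite ifF //; apply/negbTE; lia.
Qed.

Lemma lmul_Hser0 N f : ldeg_le N f -> lmul N 0 f (Hser 0) = f.
Proof.
move=> df; rewrite /lmul addn0 -{2}(to_psK df); congr of_ps.
apply: functional_extensionality => t; rewrite /ps_mul big_nat_recr //= subnn.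
rewrite to_ps_Hser eqxx mulr1 big1_seq ?add0r // => s.
rewrite mem_index_iota => /andP[_ hs]; rewrite to_ps_Hser ifF; last by apply/negbTE; lia.
by case: ifP; rewrite ?Hcoef0 mulr0.
Qed.

Lemma Hnegpart_nonneg N f n : ldeg_le N f -> 0 <= n -> Hnegpart N f n = 0.
Proof.
move=> df hn; rewrite /Hnegpart.
under eq_bigr do rewrite Hser_nonneg //.
have [m ->] : exists m : nat, n = m%:Z by exists (absz n); rewrite gez0_abs.
have [hmN|hNm] := leqP m N.
  rewrite (bigD1_seq m) ?mem_index_iota ?iota_uniq //= eqxx mulr1.
  rewrite big1 ?addr0 ?subrr // => s hs; rewrite ifF ?mulr0 //.
  by apply/negbTE; move: hs; lia.
rewrite df; last by lia.
rewrite big1_seq ?subrr // => s; rewrite mem_index_iota => /andP[_ hs].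
by rewrite ifF ?mulr0 //; apply/negbTE; lia.
Qed.

Lemma ldeg_le_Hnegpart N f : ldeg_le N f -> ldeg_le 0 (Hnegpart N f).
Proof. by move=> df n hn; apply: Hnegpart_nonneg => //; lia. Qed.

Lemma Hnegpart_bound N N' f : ldeg_le N' f -> (N' <= N)%N ->
  Hnegpart N f = Hnegpart N' f.
Proof.
move=> df hN; apply: functional_extensionality => n; rewrite /Hnegpart.
rewrite (big_cat_nat _ (n := N'.+1)) //= [\sum_(N'.+1 <= i < N.+1) _]big1_seq ?addr0 // => s.
by rewrite mem_index_iota => /andP[_ /andP[hs _]]; rewrite df ?mul0r //; lia.
Qed.

Lemma HnegpartD N f g :
  Hnegpart N (fun n => f n + g n) = fun n => Hnegpart N f n + Hnegpart N g n.
Proof.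
apply: functional_extensionality => n; rewrite /Hnegpart.
under eq_bigr do rewrite mulrDl.
rewrite big_split /=; ring.
Qed.

Lemma HnegpartN N f : Hnegpart N (fun n => - f n) = fun n => - Hnegpart N f n.
Proof.
apply: functional_extensionality => n; rewrite /Hnegpart.
under eq_bigr do rewrite mulNr.
rewrite sumrN; ring.
Qed.

Lemma HnegpartB N f g :
  Hnegpart N (fun n => f n - g n) = fun n => Hnegpart N f n - Hnegpart N g n.
Proof. by rewrite (HnegpartD N f (fun n => - g n)) HnegpartN. Qed.

Lemma Hnegpart_sum N K (c : nat -> A) (g : nat -> int -> A) :
  Hnegpart N (fun n => \sum_(m < K) c m * g m n) =
  fun n => \sum_(m < K) c m * Hnegpart N (g m) n.
Proof.
apply: functional_extensionality => n; rewrite /Hnegpart.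
under [\sum_(0 <= s < N.+1) _]eq_bigr do rewrite mulr_suml.
rewrite exchange_big /= -sumrB; apply: eq_bigr => m _.
rewrite mulrBr mulr_sumr; congr (_ - _); apply: eq_bigr => s _; ring.
Qed.

Lemma Hnegpart_Hser N : Hnegpart N (Hser N) = fun _ => 0.
Proof.
apply: functional_extensionality => n; rewrite /Hnegpart big_nat_recr //=.
rewrite big1_seq ?add0r.
  by rewrite (@Hser_nonneg N N%:Z) // eqxx mul1r subrr.
move=> s; rewrite mem_index_iota => /andP[_ hs].
by rewrite Hser_nonneg ?ifF ?mul0r //; apply/negbTE; lia.
Qed.

End HSeries.

Section CentralSystemRhs.
Variable A : comPzRingType.
Variable v : nat -> nat -> A.

Lemma ceval_esum s : ceval v (esum s) = \sum_(x <- s) ceval v x.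
Proof. by elim: s => [|x s IH]; rewrite ?big_nil ?big_cons //= IH. Qed.

Let HH a b := lmul a b (Hser v a) (Hser v b).

(* Up to degree a + b, the product (1 + O(w^(a+1))) (1 + O(w^(b+1))) in w = z^-1
   has no cross terms. *)
Lemma ps_mul_Hser a b t : (t <= a + b)%N ->
  ps_mul (to_ps a (Hser v a)) (to_ps b (Hser v b)) t =
  (if t == 0%N then 1 else if (b < t)%N then Hcoef v b (t - b) else 0) +
  (if (a < t)%N then Hcoef v a (t - a) else 0).
Proof.
move=> htab; rewrite /ps_mul big_nat_recl // to_ps_Hser eqxx mul1r subn0 to_ps_Hser.
congr (_ + _); case: t htab => [|t] htab; first by rewrite big_geq.
rewrite big_nat_recr //= subnn (to_ps_Hser v b 0) eqxx mulr1 to_ps_Hser /=.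
rewrite big1_seq ?add0r // => s; rewrite mem_index_iota => /andP[_ hs].
rewrite !to_ps_Hser /=.
case: ifP => h1; last by rewrite mul0r.
case: ifP => h2; first by lia.
by case: ifP => h3; [lia | rewrite mulr0].
Qed.

Lemma HH_coef a b (n : int) : n <= a%:Z + b%:Z ->
  HH a b n = ceval v (prodcoef a b n).
Proof.
move=> hn; rewrite /HH /lmul /of_ps /prodcoef !ifT; try lia.
rewrite ceval_esum big_map /ps_mul /index_iota subn0 PoszD.
apply: eq_big_seq => s; rewrite mem_iota => /andP[_ hs] /=.
by rewrite /to_ps /Hser; congr (_ * ceval v (coefL b _)); lia.
Qed.

Lemma sum_Hcoef_Hser c d (n : int) :
  \sum_(0 <= i < (c + d).+1)
     (if (d < i)%N then Hcoef v d (i - d) else 0) * Hser v (c + d - i) n =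
  \sum_(i <- iota 1 c) Hcoef v d i * Hser v (c - i) n.
Proof.
rewrite (big_cat_nat _ (n := d.+1)) //=; last by lia.
rewrite big1_seq ?add0r; last first.
  move=> s; rewrite mem_index_iota => /andP[_ /andP[_ hs]].
  by rewrite ifF ?mul0r //; apply/negbTE; lia.
rewrite -(add1n d) big_addn.
have -> : ((c + d).+1 - d = c.+1)%N by lia.
rewrite /index_iota subn1 /=; apply: eq_big_seq => s.
rewrite mem_iota => /andP[h1 h2]; rewrite ifT; last by lia.
by rewrite addnK; congr (_ * Hser v _ n); lia.
Qed.

Lemma HH_expansion a b (n : int) :
  \sum_(0 <= m < (a + b).+1) HH a b m%:Z * Hser v m n =
  Hser v (a + b) n + \sum_(m <- iota 1 a) Hcoef v b m * Hser v (a - m) n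
                   + \sum_(m <- iota 1 b) Hcoef v a m * Hser v (b - m) n.
Proof.
rewrite big_nat_rev /= (eq_big_nat _ _ (F2 := fun m =>
   (if m == 0%N then 1 else 0) * Hser v (a + b - m) n +
   (if (b < m)%N then Hcoef v b (m - b) else 0) * Hser v (a + b - m) n +
   (if (a < m)%N then Hcoef v a (m - a) else 0) * Hser v (a + b - m) n)); last first.
  move=> m /andP[_ hm]; rewrite add0n subSS.
  rewrite /HH /lmul /of_ps ifT; last by lia.
  have -> : absz ((a + b)%N%:Z - (a + b - m)%N%:Z) = m by lia.
  by rewrite ps_mul_Hser //; case: m hm => [|m] hm /=; ring.
rewrite !big_split /= sum_Hcoef_Hser (addnC a b) sum_Hcoef_Hser addnC.
rewrite big_nat_recl // eqxx mul1r subn0 big1 ?addr0 // => i _.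
by rewrite mul0r.
Qed.

Lemma ceval_cs_rhs a b (n : int) : n < 0 ->
  ceval v (cs_rhs a b n) = - Hnegpart v (a + b) (HH a b) n.
Proof.
move=> hn; rewrite /cs_rhs /esum /= -/esum !ceval_esum !big_map -HH_coef; last by lia.
by rewrite /Hnegpart HH_expansion /Hcoef /Hser mulrN1z; ring.
Qed.

End CentralSystemRhs.

Section DualLaurentSeries.
Variable R : comPzRingType.
Implicit Types f g : int -> dual R.

Lemma lmul_fst N M f g n :
  (lmul N M f g n).1 = lmul N M (fun m => (f m).1) (fun m => (g m).1) n.
Proof. by rewrite /lmul /of_ps; case: ifP => // _; rewrite /ps_mul dual_fst_sum. Qed.

Lemma lmul_snd N M f g n :
  (lmul N M f g n).2 = lmul N M (fun m => (f m).2) (fun m => (g m).1) n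
                     + lmul N M (fun m => (f m).1) (fun m => (g m).2) n.
Proof.
rewrite /lmul /of_ps; case: ifP => _; last by rewrite addr0.
rewrite /ps_mul dual_snd_sum -big_split /=; apply: eq_bigr => s _.
exact: addrC.
Qed.

End DualLaurentSeries.

Section SecondDerivative.
Variables (R : comPzRingType) (h : nat -> nat -> R).

Local Notation H := (Hser h).
Local Notation P := (Hnegpart h).

(* the coefficient of z^n in X_j X_k H^(i) *)
Definition XXcoef (j k i : nat) (n : int) : R :=
  P i (lmul 0 i (P (j + k) (lmul j k (H j) (H k))) (H i)) n
  + P k (lmul k 0 (H k) (P (j + i) (lmul j i (H j) (H i)))) n
  + P j (lmul j 0 (H j) (P (k + i) (lmul k i (H k) (H i)))) n
  - P (j + k + i) (lmul j (k + i) (H j) (lmul k i (H k) (H i))) n.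

Lemma XXcoefC j k i n : XXcoef j k i n = XXcoef k j i n.
Proof.
rewrite /XXcoef (lmulC j k) (addnC j k).
have -> : lmul j (k + i) (H j) (lmul k i (H k) (H i)) =
          lmul k (j + i) (H k) (lmul j i (H j) (H i)).
  by rewrite -lmulA (lmulC j k) addnC lmulA.
ring.
Qed.

Variable j : nat.

(* the point h + eps X_j *)
Local Notation hd := (fun a l => ((h a l, ceval h (Xfield j a l)) : dual R)).
Definition XHser (a : nat) (n : int) : R := ceval h (cderiv (Xfield j) (coefL a n)).

Lemma Hser_dual a n : Hser hd a n = (H a n, XHser a n).
Proof. exact: ceval_dual. Qed.

Lemma Hser_fst a : (fun n => (Hser hd a n).1) = H a.
Proof. by apply: functional_extensionality => n; rewrite Hser_dual. Qed.

Lemma Hser_snd a : (fun n => (Hser hd a n).2) = XHser a.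
Proof. by apply: functional_extensionality => n; rewrite Hser_dual. Qed.

Lemma Xfield_Hser a : XHser a = fun n => - P (j + a) (lmul j a (H j) (H a)) n.
Proof.
apply: functional_extensionality => n; rewrite /XHser /coefL.
case: (boolP (n < 0)) => hn.
  rewrite ifF; last by apply/negbTE; lia.
  rewrite /Hcoord; case: (eqVneq a 0%N) => [->|ha].
    by rewrite addn0 lmul_Hser0 ?Hnegpart_Hser ?oppr0 //; apply: ldeg_le_Hser.
  have -> : cderiv (Xfield j) (EVar a (absz n)) = cs_rhs j a n.
    by rewrite /= /Xfield /Xcomp ltz0_abs ?opprK.
  exact: ceval_cs_rhs.
rewrite Hnegpart_nonneg ?oppr0; [by case: ifP | exact: ldeg_le_lmul | lia].
Qed.

Lemma Hnegpart_snd N (f : int -> dual R) n :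
  (Hnegpart hd N f n).2 =
  P N (fun m => (f m).2) n - \sum_(0 <= m < N.+1) (f m).1 * XHser m n.
Proof.
rewrite /Hnegpart [(_ - _).2]/= dual_snd_sum.
under eq_bigr => m _ do rewrite Hser_dual dual_mulE [(_, _).2]/=.
by rewrite big_split /=; ring.
Qed.

Lemma Hnegpart_deriv_prod k i n :
  P (k + i) (fun m => lmul k i (XHser k) (H i) m + lmul k i (H k) (XHser i) m) n =
  - (P i (lmul 0 i (P (j + k) (lmul j k (H j) (H k))) (H i)) n
     + P k (lmul k 0 (H k) (P (j + i) (lmul j i (H j) (H i)))) n).
Proof.
have dGk := ldeg_le_Hnegpart h (ldeg_le_lmul (N:=j) (M:=k) (H j) (H k)).
have dGi := ldeg_le_Hnegpart h (ldeg_le_lmul (N:=j) (M:=i) (H j) (H i)).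
rewrite (Xfield_Hser k) (Xfield_Hser i) lmulNl lmulNr HnegpartD !HnegpartN.
rewrite (lmul_boundl _ _ dGk) // (lmul_boundr _ _ dGi) //.
rewrite (Hnegpart_bound h (ldeg_le_lmul (N:=0) (M:=i) _ _)) ?leq_addl //.
have dkG := ldeg_le_lmul (N:=k) (M:=0) (H k) (P (j + i) (lmul j i (H j) (H i))).
rewrite addn0 in dkG.
by rewrite (Hnegpart_bound h dkG) ?leq_addr //; ring.
Qed.

Lemma sum_coef_XHser N f n : ldeg_le N f ->
  \sum_(0 <= m < N.+1) f m%:Z * XHser m n =
  P j (lmul j 0 (H j) (P N f)) n - P (j + N) (lmul j N (H j) f) n.
Proof.
move=> df.
rewrite (eq_big_nat _ _ (F2 := fun m : nat =>
    - (f m%:Z * P (j + N) (lmul j N (H j) (H m)) n))); last first.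
  move=> m /andP[_ hm]; rewrite (Xfield_Hser m) mulrN; congr (- (_ * _)).
  rewrite (lmul_boundr _ _ (ldeg_le_Hser h (a:=m))); last by lia.
  by rewrite (Hnegpart_bound h (ldeg_le_lmul (N:=_) (M:=_) _ _)) //; lia.
rewrite sumrN big_mkord.
have := congr1 (@^~ n)
  (Hnegpart_sum h (j + N) N.+1 (fun m => f m%:Z) (fun m => lmul j N (H j) (H m))).
move=> /= <-.
rewrite -(lmul_sumr j N _ (fun m => f m%:Z) (H j) H).
have -> : (fun n => \sum_(m < N.+1) f m%:Z * H m n) = (fun n => f n - P N f n).
  by apply: functional_extensionality => n'; rewrite /Hnegpart big_mkord; ring.
rewrite lmulBr HnegpartB (lmul_boundr _ _ (ldeg_le_Hnegpart h df)) //.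
have djP := ldeg_le_lmul (N:=j) (M:=0) (H j) (P N f); rewrite addn0 in djP.
by rewrite (Hnegpart_bound h djP) ?leq_addr //; ring.
Qed.

Lemma Xfield_Xcomp k i l : (0 < l)%N ->
  ceval h (cderiv (Xfield j) (Xcomp k i l)) = XXcoef j k i (- l%:Z).
Proof.
move=> hl; have hn : - l%:Z < 0 by lia.
have -> : ceval h (cderiv (Xfield j) (Xcomp k i l)) = (ceval hd (Xcomp k i l)).2.
  by rewrite ceval_dual.
rewrite /Xcomp (ceval_cs_rhs _ k i hn) dual_sndN Hnegpart_snd.
under eq_bigr => m _ do rewrite lmul_fst !Hser_fst.
have -> : (fun m => (lmul k i (Hser hd k) (Hser hd i) m).2) =
          (fun m => lmul k i (XHser k) (H i) m + lmul k i (H k) (XHser i) m).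
  by apply: functional_extensionality => m; rewrite lmul_snd !Hser_fst !Hser_snd.
rewrite Hnegpart_deriv_prod sum_coef_XHser; last exact: ldeg_le_lmul.
by rewrite /XXcoef addnA; ring.
Qed.

End SecondDerivative.

Local Close Scope ring_scope.

Theorem mainTheorem4 (R : comPzRingType) (h : nat -> nat -> R) (j k i l : nat) :
  (0 < j)%N -> (0 < k)%N -> (0 < l)%N ->
  ceval h (cderiv (Xfield j) (Xcomp k i l)) =
  ceval h (cderiv (Xfield k) (Xcomp j i l)).
Proof.
by move=> _ _ hl; rewrite !Xfield_Xcomp // XXcoefC.
Qed.
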